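(* Let $t$ be any variable-free $\mathcal{L}$-term and let $s$ be the sequence that is the interpretation of $t$ in the standard structure $\mathfrak{S}$. Then $\mathsf{WSeq}_2 \vdash t = \overline{s}$, where $\mathsf{WSeq}_2$ denotes the axiom scheme $\overline{(s_1,\ldots,s_n)}\circ\overline{(t_1,\ldots,t_m)} = \overline{(s_1,\ldots,s_n,t_1,\ldots,t_m)}$ for all sequences $(s_1,\ldots,s_n)$ and $(t_1,\ldots,t_m)$ (with $n,m\ge 0$).
   Context: $\mathcal{L}$ is the first-order language $\{e, \vdash, \circ\}$ with $e$ a constant symbol and $\vdash$ (written infix, $x\vdash y$), $\circ$ binary function symbols. Sequences are defined inductively: the empty sequence $()$ is a sequence, and for $n>0$, if $s_1,\ldots,s_n$ are sequences then $(s_1,\ldots,s_n)$ is a sequence. The standard structure $\mathfrak{S}$ has the set of all sequences as universe, $e^{\mathfrak{S}}=()$, $(s_1,\ldots,s_n)\vdash^{\mathfrak{S}} t = (s_1,\ldots,s_n,t)$ (appending $t$ as a new last element), and $(s_1,\ldots,s_n)\circ^{\mathfrak{S}}(t_1,\ldots,t_m)=(s_1,\ldots,s_n,t_1,\ldots,t_m)$ (concatenation). For a sequence $s$, the sequeral $\overline{s}$ is the variable-free term defined by $\overline{()}=e$ and $\overline{(s_1,\ldots,s_n)} = (\ldots((e\vdash \overline{s_1})\vdash\overline{s_2})\ldots)\vdash\overline{s_n}$. *)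

From Stdlib Require Import List.
Import ListNotations.

Inductive sq : Type := node : list sq -> sq.

(** L-terms: variables, constant e, binary |- (tsnoc), binary o (tcat). *)
Inductive term : Type :=
| var : nat -> term
| te : term
| tsnoc : term -> term -> term
| tcat : term -> term -> term.

Inductive closed : term -> Prop :=
| closed_e : closed te
| closed_snoc : forall a b, closed a -> closed b -> closed (tsnoc a b)
| closed_cat : forall a b, closed a -> closed b -> closed (tcat a b).

Fixpoint interp (rho : nat -> sq) (t : term) : sq :=
  match t with
  | var n => rho n
  | te => node nil
  | tsnoc a b => match interp rho a with node l => node (l ++ [interp rho b]) end
  | tcat a b => match interp rho a, interp rho b with
                | node l1, node l2 => node (l1 ++ l2) end
  end.

(** Sequerals: bar () = e, bar (s_1..s_n) = (..((e |- bar s_1) |- bar s_2)..) |- bar s_n *)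
Fixpoint sequeral (s : sq) : term :=
  match s with
  | node l =>
      (fix go (acc : term) (l : list sq) : term :=
         match l with
         | nil => acc
         | x :: l' => go (tsnoc acc (sequeral x)) l'
         end) te l
  end.

Inductive form : Type :=
| fbot : form
| feq : term -> term -> form
| fimp : form -> form -> form
| fand : form -> form -> form
| f_or : form -> form -> form
| fall : form -> form
| fex : form -> form.

Fixpoint tsubst (sigma : nat -> term) (t : term) : term :=
  match t with
  | var n => sigma n
  | te => te
  | tsnoc a b => tsnoc (tsubst sigma a) (tsubst sigma b)
  | tcat a b => tcat (tsubst sigma a) (tsubst sigma b)
  end.

Definition up (sigma : nat -> term) : nat -> term :=
  fun n => match n with
           | 0 => var 0
           | S k => tsubst (fun m => var (S m)) (sigma k)
           end.

Fixpoint fsubst (sigma : nat -> term) (f : form) : form :=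
  match f with
  | fbot => fbot
  | feq a b => feq (tsubst sigma a) (tsubst sigma b)
  | fimp p q => fimp (fsubst sigma p) (fsubst sigma q)
  | fand p q => fand (fsubst sigma p) (fsubst sigma q)
  | f_or p q => f_or (fsubst sigma p) (fsubst sigma q)
  | fall p => fall (fsubst (up sigma) p)
  | fex p => fex (fsubst (up sigma) p)
  end.

Definition flift (f : form) : form := fsubst (fun n => var (S n)) f.
Definition subst0 (t : term) (f : form) : form :=
  fsubst (fun n => match n with 0 => t | S k => var k end) f.
Definition fneg (f : form) : form := fimp f fbot.

Inductive Prov (T : form -> Prop) : list form -> form -> Prop :=
| P_ax : forall G f, In f G -> Prov T G f
| P_thy : forall G f, T f -> Prov T G f
| P_raa : forall G f, Prov T (fneg f :: G) fbot -> Prov T G f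
| P_impI : forall G f g, Prov T (f :: G) g -> Prov T G (fimp f g)
| P_impE : forall G f g, Prov T G (fimp f g) -> Prov T G f -> Prov T G g
| P_andI : forall G f g, Prov T G f -> Prov T G g -> Prov T G (fand f g)
| P_andE1 : forall G f g, Prov T G (fand f g) -> Prov T G f
| P_andE2 : forall G f g, Prov T G (fand f g) -> Prov T G g
| P_orI1 : forall G f g, Prov T G f -> Prov T G (f_or f g)
| P_orI2 : forall G f g, Prov T G g -> Prov T G (f_or f g)
| P_orE : forall G f g h, Prov T G (f_or f g) -> Prov T (f :: G) h ->
            Prov T (g :: G) h -> Prov T G h
| P_allI : forall G f, Prov T (map flift G) f -> Prov T G (fall f)
| P_allE : forall G f t, Prov T G (fall f) -> Prov T G (subst0 t f)
| P_exI : forall G f t, Prov T G (subst0 t f) -> Prov T G (fex f)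
| P_exE : forall G f h, Prov T G (fex f) -> Prov T (f :: map flift G) (flift h) ->
            Prov T G h
| P_eqR : forall G t, Prov T G (feq t t)
| P_eqE : forall G s t f, Prov T G (feq s t) -> Prov T G (subst0 s f) ->
            Prov T G (subst0 t f).

Definition WSeq2 (f : form) : Prop :=
  exists l1 l2 : list sq,
    f = feq (tcat (sequeral (node l1)) (sequeral (node l2)))
            (sequeral (node (l1 ++ l2))).

(** Because [bar (s_1, ..., s_n, x)] is
    literally the term [bar (s_1, ..., s_n) |- bar x], the case [a |- b] needs
    nothing beyond congruence of equality; the case [a o b] reduces by
    congruence to [bar (s_1, ..., s_n) o bar (t_1, ..., t_m)], which is an
    instance of WSeq_2.  The equality rules of the calculus act by
    substitution, and closed terms are fixed by every substitution. *)

From Stdlib Require Import List.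
Import ListNotations.

Fixpoint sq_ind_Forall (P : sq -> Prop)
    (Hnode : forall l, Forall P l -> P (node l)) (s : sq) : P s :=
  match s with
  | node l =>
      Hnode l ((fix all_P (l : list sq) : Forall P l :=
                  match l with
                  | [] => Forall_nil P
                  | x :: l' => Forall_cons x (sq_ind_Forall P Hnode x) (all_P l')
                  end) l)
  end.

Definition snoc_sequerals (acc : term) (l : list sq) : term :=
  fold_left (fun u x => tsnoc u (sequeral x)) l acc.

Lemma sequeral_node (l : list sq) : sequeral (node l) = snoc_sequerals te l.
Proof.
  unfold snoc_sequerals; simpl; generalize te.
  induction l as [|x l IHl]; intros acc; simpl; auto.
Qed.

Lemma sequeral_rcons (l : list sq) (x : sq) :
  sequeral (node (l ++ [x])) = tsnoc (sequeral (node l)) (sequeral x).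
Proof.
  rewrite !sequeral_node; unfold snoc_sequerals.
  now rewrite fold_left_app.
Qed.

Lemma closed_sequeral (s : sq) : closed (sequeral s).
Proof.
  induction s as [l Hl] using sq_ind_Forall.
  rewrite sequeral_node; unfold snoc_sequerals.
  assert (Hacc : closed te) by constructor.
  revert Hacc; generalize te.
  induction Hl as [|x l Hx _ IHl]; intros acc Hacc; simpl; auto.
  apply IHl; now constructor.
Qed.

Lemma tsubst_closed (sigma : nat -> term) (t : term) :
  closed t -> tsubst sigma t = t.
Proof. induction 1; simpl; congruence. Qed.

Section Equality.

Variables (T : form -> Prop) (G : list form).

Lemma Prov_eq_trans (x y z : term) :
  closed x -> Prov T G (feq x y) -> Prov T G (feq y z) -> Prov T G (feq x z).
Proof.
  intros Hx Hxy Hyz.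
  pose proof (P_eqE T G y z (feq x (var 0)) Hyz) as Hrew.
  unfold subst0 in Hrew; simpl in Hrew.
  rewrite !tsubst_closed in Hrew by exact Hx.
  now apply Hrew.
Qed.

Lemma Prov_eq_congr2 (op : term -> term -> term)
    (tsubst_op : forall sigma a b,
        tsubst sigma (op a b) = op (tsubst sigma a) (tsubst sigma b))
    (a b A B : term) :
  closed a -> closed b -> closed A ->
  Prov T G (feq a A) -> Prov T G (feq b B) -> Prov T G (feq (op a b) (op A B)).
Proof.
  intros Ha Hb HA HaA HbB.
  pose proof (P_eqE T G a A (feq (op a b) (op (var 0) b)) HaA) as Hleft.
  pose proof (P_eqE T G b B (feq (op a b) (op A (var 0))) HbB) as Hright.
  unfold subst0 in Hleft, Hright; simpl in Hleft, Hright.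
  rewrite !tsubst_op in Hleft, Hright; simpl in Hleft, Hright.
  rewrite !tsubst_closed in Hleft by assumption.
  rewrite !tsubst_closed in Hright by assumption.
  apply Hright, Hleft, P_eqR.
Qed.

End Equality.

Theorem lemma1 : forall (t : term), closed t ->
  Prov WSeq2 nil (feq t (sequeral (interp (fun _ => node nil) t))).
Proof.
  induction 1 as [|a b Ha IHa Hb IHb|a b Ha IHa Hb IHb]; simpl.
  - apply P_eqR.
  - destruct (interp (fun _ => node nil) a) as [la].
    rewrite sequeral_rcons.
    apply (Prov_eq_congr2 _ _ tsnoc); auto using closed_sequeral.
  - destruct (interp (fun _ => node nil) a) as [la].
    destruct (interp (fun _ => node nil) b) as [lb].
    apply Prov_eq_trans with (tcat (sequeral (node la)) (sequeral (node lb))).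
    + now constructor.
    + apply (Prov_eq_congr2 _ _ tcat); auto using closed_sequeral.
    + apply P_thy; now exists la, lb.
Qed.
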